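(* Let $X$ be a Tychonoff space. The following are equivalent: (1) $X$ is dense-pseudocompact; (2) for every continuous function $f\colon X\to\mathbb{R}$, the range $f(X)$ is finite; (3) $X$ is finite; (4) $X$ is hereditarily pseudocompact (every subspace of $X$ is pseudocompact).
   Context: A space is pseudocompact if every continuous real-valued function on it is bounded. A space $X$ is dense-pseudocompact if every dense subset of $X$ (with the subspace topology) is pseudocompact. *)

From HB Require Import structures.
From mathcomp Require Import all_boot all_order all_algebra.
From mathcomp Require Import all_classical all_reals all_analysis.
Set Implicit Arguments. Unset Strict Implicit. Unset Printing Implicit Defensive.
Import Order.TTheory GRing.Theory Num.Theory.
Import numFieldTopology.Exports numFieldNormedType.Exports.
Local Open Scope classical_set_scope.
Local Open Scope ring_scope.

Definition tychonoff_space (R : realType) (X : topologicalType) : Prop :=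
  accessible_space X /\
  forall (x : X) (B : set X), closed B -> ~ B x ->
    exists f : X -> R, [/\ continuous f, f x = 0,
      (forall y, B y -> f y = 1) & (forall y, 0 <= f y <= 1)].

Definition pseudocompact_subspace (R : realType) (X : topologicalType)
  (A : set X) : Prop :=
  forall f : X -> R, {within A, continuous f} ->
    exists M : R, forall x, A x -> `|f x| <= M.

Definition dense_pseudocompact (R : realType) (X : topologicalType) : Prop :=
  forall D : set X, dense D -> pseudocompact_subspace R D.

Definition hereditarily_pseudocompact (R : realType) (X : topologicalType)
  : Prop := forall A : set X, pseudocompact_subspace R A.

From HB Require Import structures.
From mathcomp Require Import all_boot all_order all_algebra.
From mathcomp Require Import all_classical all_reals all_analysis.
Set Implicit Arguments. Unset Strict Implicit. Unset Printing Implicit Defensive.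
Import Order.TTheory GRing.Theory Num.Theory.
Import numFieldTopology.Exports numFieldNormedType.Exports.
Local Open Scope classical_set_scope.
Local Open Scope ring_scope.

(* (3) -> (4) because a real function on a finite set has finite, hence
   bounded, range; (4) -> (1) is immediate; (3) -> (2) is trivial.
   (1) -> (2): X is dense in itself, so every continuous f is bounded; an
   infinite bounded range would have a limit point r.  For any set E the set
   ~` E `|` E° is dense; for E = f^-1(r) the function 1/(f - r) is continuous
   on it, yet unbounded because f takes values arbitrarily close to r.
   (2) -> (3): the zero set of a Urysohn function is then clopen, so distinct
   points are separated by clopen sets.  If X were infinite, repeatedly
   splitting off an infinite clopen piece gives a strictly decreasing chain of
   clopen sets X = X_0 ⊇ X_1 ⊇ ...; the function equal to 1/(n+1) on the layer
   X_n `\` X_(n+1) and to 0 on the intersection of the chain is continuous with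
   infinite range. *)

Lemma finite_set_bounded (R : realType) (S : set R) :
  finite_set S -> exists M : R, forall x, S x -> `|x| <= M.
Proof.
move=> /finite_compact/compact_bounded.
rewrite /bounded_near => /pinfty_ex_gt0 [M _ SM].
by exists M => x Sx; apply: SM.
Qed.

Lemma finite_hereditarily_pseudocompact (R : realType) (X : topologicalType) :
  finite_set [set: X] -> hereditarily_pseudocompact R X.
Proof.
move=> finX A f _.
have [M fM] := @finite_set_bounded R _ (finite_image f finX).
by exists M => x _; apply: fM; exists x.
Qed.

Lemma hereditarily_dense_pseudocompact (R : realType) (X : topologicalType) :
  hereditarily_pseudocompact R X -> dense_pseudocompact R X.
Proof. by move=> hpX D _; apply: hpX. Qed.

Section dense_pseudocompact_finite_range.
Variable X : topologicalType.

Lemma dense_setT : dense [set: X].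
Proof. by move=> O [x Ox] _; exists x. Qed.

(* The complement of a set together with its interior is dense: a nonempty
   open set missing ~` E lies in E, hence in E°. *)
Lemma dense_setC_interior (E : set X) : dense (~` E `|` E°).
Proof.
move=> O [x Ox] oO; have [OE|] := pselect (O `<=` E).
  exists x; split => //; right.
  have : O° x by move: oO; rewrite openE; apply.
  exact: filterS OE.
by move=> /existsNP [y /not_implyP [Oy nEy]]; exists y; split => //; left.
Qed.

Variables (R : realType) (f : X -> R) (r : R).

(* The reciprocal distance from f to the value r (0 on the fibre over r). *)
Definition inv_dist (x : X) : R := (f x - r)^-1.

(* Off the fibre it is a quotient of continuous functions; on the interior
   of the fibre it is locally constant. *)
Lemma inv_dist_continuous : continuous f ->
  {within ~` (f @^-1` [set r]) `|` (f @^-1` [set r])°, continuous inv_dist}.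
Proof.
move=> cf; apply: continuous_in_subspaceT => x; rewrite inE => -[/eqP fxr|].
  have fr0 : f x - r != 0 by rewrite subr_eq0.
  exact: (cvgV fr0 (cvgB (cf x) (cvg_cst r))).
move=> fibre_x; apply: (@near_cst_continuous _ _ 0).
apply: filterS fibre_x => y /= fyr.
by rewrite /inv_dist fyr subrr invr0.
Qed.

Lemma inv_dist_unbounded : limit_point (range f) r ->
  forall K : R, exists x, f x != r /\ K < `|inv_dist x|.
Proof.
move=> lim_r K.
have eps_gt0 : 0 < (`|K| + 1)^-1 by rewrite invr_gt0 ltr_wpDl.
have [y [yr [x _ fxy] y_near]] := lim_r _ (nbhsx_ballx r _ eps_gt0).
move: fxy yr y_near => <- fxr fx_near; exists x; split => //.
have dist_gt0 : 0 < `|f x - r| by rewrite normr_gt0 subr_eq0.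
rewrite /ball /= distrC in fx_near.
rewrite /inv_dist normfV (@le_lt_trans _ _ (`|K| + 1)) //.
  by rewrite ler_wpDr // ler_norm.
by rewrite -[`|K| + 1]invrK ltf_pV2 ?posrE.
Qed.

End dense_pseudocompact_finite_range.

Lemma dense_pseudocompact_finite_range (R : realType) (X : topologicalType) :
  dense_pseudocompact R X ->
  forall f : X -> R, continuous f -> finite_set (range f).
Proof.
move=> dpX f cf; apply: contrapT => inf_range.
have [M fM] := dpX _ (@dense_setT X) f (continuous_subspaceT cf).
have bounded_range : bounded_set (range f).
  rewrite /= /bounded_near; near=> N => y [x _ <-].
  apply: le_trans (fM x I) _; near: N; apply: nbhs_pinfty_ge.
  exact: num_real.
have [r lim_r] := infinite_bounded_limit_point_nonempty inf_range bounded_range.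
have [K gK] := dpX _ (dense_setC_interior (f @^-1` [set r]))
  (inv_dist f r) (inv_dist_continuous (r := r) cf).
have [x [/eqP fxr Kx]] := inv_dist_unbounded lim_r K.
by have := gK x (or_introl fxr); rewrite leNgt Kx.
Unshelve. all: by end_near.
Qed.

(* In a Tychonoff space where continuous real functions have finite range,
   the zero set of a Urysohn function is clopen, so distinct points are
   separated by clopen sets. *)
Lemma finite_range_clopen_separation (R : realType) (X : topologicalType) :
  tychonoff_space R X ->
  (forall f : X -> R, continuous f -> finite_set (range f)) ->
  forall a b : X, a != b -> exists U : set X, [/\ clopen U, U a & ~ U b].
Proof.
move=> [T1X urysohn] fin_range a b ab.
have [|f [cf fa fb _]] := urysohn a [set b] (accessible_closed_set1 T1X (x := b)).
  by move=> /= ab'; rewrite ab' eqxx in ab.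
have closed_finR := (@accessible_finite_set_closed R).1
  (hausdorff_accessible (@Rhausdorff R)).
have zero_setE : f @^-1` [set 0] = f @^-1` ~` (range f `\ 0).
  apply/seteqP; split => y /=; first by move=> fy0 [_]; apply.
  by move=> /not_andP [[]|/contrapT //]; exists y.
exists (f @^-1` [set 0]).
split; [split|exact: fa|by rewrite /= fb //; apply/eqP/oner_neq0].
- rewrite zero_setE; apply: open_comp (fun y _ => cf y) _.
  apply: closed_openC; apply: closed_finR.
  exact: sub_finite_set (@subDsetl _ _ _) (fin_range f cf).
- exact: preimage_closed (fun y _ => cf y) (closed_finR _ (finite_set1 _)).
Qed.

Section clopen_chain.
Variable X : topologicalType.
Hypothesis clopen_sep :
  forall a b : X, a != b -> exists U : set X, [/\ clopen U, U a & ~ U b].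

(* An infinite clopen set has a proper infinite clopen subset: separate two of
   its points and keep whichever of the two pieces is infinite. *)
Lemma clopen_infinite_split (Y : set X) : clopen Y -> infinite_set Y ->
  exists Z, [/\ clopen Z, infinite_set Z, Z `<=` Y & exists x, Y x /\ ~ Z x].
Proof.
move=> clY infY; have [a Ya] := infinite_setN0 infY.
have [b [Yb ba]] := infinite_setN0 (infinite_setD infY (finite_set1 a)).
have [U [clU Ua Ub]] : exists U, [/\ clopen U, U a & ~ U b].
  by apply: clopen_sep; apply/eqP => ab; apply: ba; rewrite ab.
have YE : Y = (Y `&` U) `|` (Y `&` ~` U).
  by rewrite -setIUr setUv setIT.
have [finYU|infYU] := pselect (finite_set (Y `&` U)).
  have clCU : clopen (~` U).
    by case: clU => oU cU; split; [exact: closed_openC|exact: open_closedC].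
  exists (Y `&` ~` U); split; first exact: (clopenI clY clCU).
  - by move=> finYCU; apply: infY; rewrite YE finite_setU.
  - exact: subIsetl.
  - by exists a; split => // -[].
exists (Y `&` U); split; first exact: (clopenI clY clU).
- exact: infYU.
- exact: subIsetl.
- by exists b; split => // -[].
Qed.

Lemma clopen_chain : infinite_set [set: X] ->
  exists Xn : nat -> set X, [/\ Xn 0%N = setT, forall n, clopen (Xn n),
    forall n, Xn n.+1 `<=` Xn n & forall n, exists x, Xn n x /\ ~ Xn n.+1 x].
Proof.
move=> infX; pose P (Y : set X) := clopen Y /\ infinite_set Y.
have split_step : forall Y, exists Z, P Y ->
    [/\ P Z, Z `<=` Y & exists x, Y x /\ ~ Z x].
  move=> Y; have [[clY infY]|] := pselect (P Y); last by exists Y.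
  have [Z [clZ infZ ZY YZ]] := clopen_infinite_split clY infY.
  by exists Z.
have [next nextP] := choice split_step.
pose Xn n := iter n next setT.
have PXn : forall n, P (Xn n).
  elim=> [|n IH]; first by split; [exact: clopenT|exact: infX].
  by have [] := nextP _ IH.
exists Xn; split => // n; first by case: (PXn n).
- by have [] := nextP _ (PXn n).
- by have [_ _] := nextP _ (PXn n).
Qed.

End clopen_chain.

Section layer_function.
Variables (R : realType) (X : topologicalType) (Xn : nat -> set X).
Hypotheses (Xn0 : Xn 0%N = setT) (clopenXn : forall n, clopen (Xn n))
  (Xn_dec : forall n, Xn n.+1 `<=` Xn n).

Definition layer n := Xn n `&` ~` Xn n.+1.

Lemma chain_le n m : (n <= m)%N -> Xn m `<=` Xn n.
Proof.
move=> /subnKC <-; elim: (m - n)%N => [|k IH]; first by rewrite addn0.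
by rewrite addnS => x /Xn_dec /IH.
Qed.

Lemma layer_open n : open (layer n).
Proof. exact: openI (proj1 (clopenXn n)) (closed_openC (proj2 (clopenXn _))). Qed.

Lemma layer_unique n m x : layer n x -> layer m x -> n = m.
Proof.
move=> [Xnx nXn] [Xmx nXm]; case: (ltngtP n m) => // [nm|mn].
  by exfalso; apply: nXn; apply: chain_le nm _ Xmx.
by exfalso; apply: nXm; apply: chain_le mn _ Xnx.
Qed.

Lemma no_layer_chain x : ~ (exists n, layer n x) -> forall n, Xn n x.
Proof.
move=> nlayer; elim=> [|n IH]; first by rewrite Xn0.
by apply: contrapT => nXn; apply: nlayer; exists n.
Qed.

Definition layer_fun (x : X) : R :=
  if pselect (exists n, layer n x) is left h
  then ((projT1 (cid h)).+1%:R)^-1 else 0.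

Lemma layer_funE n x : layer n x -> layer_fun x = (n.+1%:R)^-1.
Proof.
move=> layer_nx; rewrite /layer_fun; case: pselect => [h|]; last first.
  by move=> []; exists n.
by rewrite (layer_unique (projT2 (cid h)) layer_nx).
Qed.

Lemma layer_fun0 x : ~ (exists n, layer n x) -> layer_fun x = 0.
Proof. by move=> nlayer; rewrite /layer_fun; case: pselect. Qed.

(* Layers are open, so layer_fun is locally constant on them; near a point of
   the whole chain, the open set X_N only meets layers n >= N, where
   layer_fun is at most 1/(N+1). *)
Lemma layer_fun_continuous : continuous layer_fun.
Proof.
move=> x; have [[n layer_nx]|nlayer] := pselect (exists n, layer n x).
  apply: (@near_cst_continuous _ _ (layer_fun x)).
  apply: filterS (open_nbhs_nbhs (conj (layer_open n) layer_nx)) => y layer_ny.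
  by rewrite (layer_funE layer_ny) (layer_funE layer_nx).
apply/cvgrPdist_lt => e e_gt0; pose N := Num.truncn e^-1.
have invN_lt : (N.+1%:R)^-1 < e.
  by rewrite -[e]invrK ltf_pV2 ?posrE ?invr_gt0 ?ltr0n // truncnS_gt.
have XN_nbhs : nbhs x (Xn N).
  exact: open_nbhs_nbhs (conj (proj1 (clopenXn N)) (no_layer_chain nlayer N)).
apply: filterS XN_nbhs => y XNy; rewrite (layer_fun0 nlayer) sub0r normrN.
have [[m layer_my]|nlayer_y] := pselect (exists m, layer m y); last first.
  by rewrite layer_fun0 ?normr0.
have Nm : (N <= m)%N.
  rewrite leqNgt; apply/negP => mN; case: layer_my => _; apply.
  exact: chain_le mN _ XNy.
rewrite (layer_funE layer_my) ger0_norm ?invr_ge0 ?ler0n //.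
by apply: le_lt_trans invN_lt; rewrite lef_pV2 ?posrE ?ltr0n // ler_nat.
Qed.

Lemma layer_fun_infinite_range :
  (forall n, exists x, layer n x) -> infinite_set (range layer_fun).
Proof.
move=> layerN0 fin_range; apply: infinite_nat.
pose index (v : R) := (Num.truncn v^-1).-1.
apply: sub_finite_set (finite_image index fin_range) => n _.
have [x layer_nx] := layerN0 n; exists (layer_fun x); first by exists x.
by rewrite /index (layer_funE layer_nx) invrK natrK.
Qed.

End layer_function.

Lemma finite_range_finite_space (R : realType) (X : topologicalType) :
  tychonoff_space R X ->
  (forall f : X -> R, continuous f -> finite_set (range f)) ->
  finite_set [set: X].
Proof.
move=> tX fin_range; apply: contrapT.
move=> /(clopen_chain (finite_range_clopen_separation tX fin_range)).
move=> [Xn [Xn0 clXn Xn_dec layerN0]].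
apply: (layer_fun_infinite_range Xn_dec layerN0 (R := R)).
exact/fin_range/(layer_fun_continuous Xn0 clXn Xn_dec).
Qed.

Theorem theorem3p3 (R : realType) (X : topologicalType) :
  tychonoff_space R X ->
  (dense_pseudocompact R X <->
     (forall f : X -> R, continuous f -> finite_set (range f)))
  /\ ((forall f : X -> R, continuous f -> finite_set (range f)) <->
        finite_set [set: X])
  /\ (finite_set [set: X] <-> hereditarily_pseudocompact R X).
Proof.
move=> tX.
have fin_range_fin := @finite_range_finite_space R X tX.
have fin_hp := @finite_hereditarily_pseudocompact R X.
have hp_dp := @hereditarily_dense_pseudocompact R X.
have dp_fin_range := @dense_pseudocompact_finite_range R X.
split; [split|split; split].
- exact: dp_fin_range.
- by move=> /fin_range_fin /fin_hp /hp_dp.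
- exact: fin_range_fin.
- by move=> finX f _; apply: finite_image.
- exact: fin_hp.
- by move=> /hp_dp /dp_fin_range /fin_range_fin.
Qed.
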